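(* Consider the Gaussian partial interference multiple access channel (PIMAC) with real channel coefficients $h_{12},h_{22},h_{31}$ and transmit power constraints $P_1,P_2,P_3>0$. Define the SD-TIN sum-rate $$R_\Sigma^{SD\text{-}TIN}=\frac{1}{2}\log\left(1+\frac{P_1+P_2}{1+h_{31}^2P_3}\right)+\frac{1}{2}\log\left(1+\frac{P_3}{1+h_{12}^2P_1+h_{22}^2P_2}\right)$$ and the TDMA-TIN sum-rate $R_\Sigma^{TDMA\text{-}TIN}=\max_{\alpha\in[0,1]}\big(A(\alpha)+B(\alpha)\big)$, where $$A(\alpha)=\frac{\alpha}{2}\log\left(1+\frac{P_1/\alpha}{1+h_{31}^2P_3}\right)+\frac{1-\alpha}{2}\log\left(1+\frac{P_2/(1-\alpha)}{1+h_{31}^2P_3}\right),$$ $$B(\alpha)=\frac{\alpha}{2}\log\left(1+\frac{P_3}{1+h_{12}^2P_1/\alpha}\right)+\frac{1-\alpha}{2}\log\left(1+\frac{P_3}{1+h_{22}^2P_2/(1-\alpha)}\right)$$ (with the terms at $\alpha=0$ and $\alpha=1$ understood as their limits). Then $R_\Sigma^{TDMA\text{-}TIN}\geq R_\Sigma^{SD\text{-}TIN}$; moreover, already the choice $\alpha=\alpha^*=\frac{P_1}{P_1+P_2}$ gives $A(\alpha^* )+B(\alpha^* )\ge R_\Sigma^{SD\text{-}TIN}$, and if $h_{12}^2\neq h_{22}^2$ then $A(\alpha^* )+B(\alpha^* )> R_\Sigma^{SD\text{-}TIN}$, so in particular $R_\Sigma^{TDMA\text{-}TIN}> R_\Sig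ma^{SD\text{-}TIN}$.
   Context: The PIMAC has received signals $Y_1=X_1+X_2+h_{31}X_3+Z_1$ and $Y_2=h_{12}X_1+h_{22}X_2+X_3+Z_2$, where $Z_1,Z_2\sim\mathcal{N}(0,1)$ are i.i.d. noise, receiver 1 wants the messages of transmitters 1 and 2, receiver 2 wants the message of transmitter 3, and transmitter $i$ has average power constraint $P_i$. $R_\Sigma^{SD\text{-}TIN}$ is the sum-rate achieved with Gaussian codes at full power, successive decoding at receiver 1 treating $X_3$ as noise, and receiver 2 treating $X_1,X_2$ as noise; $R_\Sigma^{TDMA\text{-}TIN}$ is the sum-rate when users 1 and 2 time-share (fractions $\alpha$, $1-\alpha$, with powers $P_1/\alpha$, $P_2/(1-\alpha)$) and all receivers treat interference as noise. Logarithms are base 2. *)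

From Stdlib Require Import Reals.
From Coquelicot Require Import Coquelicot.
Open Scope R_scope.

Definition log2 (x : R) : R := ln x / ln 2.

Definition R_SD_TIN (h12 h22 h31 P1 P2 P3 : R) : R :=
  / 2 * log2 (1 + (P1 + P2) / (1 + h31 ^ 2 * P3))
  + / 2 * log2 (1 + P3 / (1 + h12 ^ 2 * P1 + h22 ^ 2 * P2)).

(* A(alpha): the terms with weight alpha (resp. 1 - alpha) are set to their
   limit 0 when alpha = 0 (resp. alpha = 1). *)
Definition tdmaA (h12 h22 h31 P1 P2 P3 a : R) : R :=
  (if Req_EM_T a 0 then 0
   else a / 2 * log2 (1 + (P1 / a) / (1 + h31 ^ 2 * P3)))
  + (if Req_EM_T (1 - a) 0 then 0
     else (1 - a) / 2 * log2 (1 + (P2 / (1 - a)) / (1 + h31 ^ 2 * P3))).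

Definition tdmaB (h12 h22 h31 P1 P2 P3 a : R) : R :=
  (if Req_EM_T a 0 then 0
   else a / 2 * log2 (1 + P3 / (1 + h12 ^ 2 * P1 / a)))
  + (if Req_EM_T (1 - a) 0 then 0
     else (1 - a) / 2 * log2 (1 + P3 / (1 + h22 ^ 2 * P2 / (1 - a)))).

(* TDMA-TIN sum-rate: the max over alpha in [0,1] of A + B, taken as the
   supremum (in Rbar) of the set of achieved values. *)
Definition R_TDMA_TIN (h12 h22 h31 P1 P2 P3 : R) : Rbar :=
  Lub_Rbar (fun y => exists a, 0 <= a <= 1 /\
     y = tdmaA h12 h22 h31 P1 P2 P3 a + tdmaB h12 h22 h31 P1 P2 P3 a).

(* With the time share a = P1/(P1+P2), both transmitters of receiver 1 use
   the common power P1 + P2 while active, so the rate of receiver 1 coincides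
   with the SD-TIN one.  The rate of receiver 2 becomes the convex combination
   a g(h12^2 (P1+P2)) + (1 - a) g(h22^2 (P1+P2)) of the function
   g(t) = log(1 + P3/(1+t)), whereas SD-TIN achieves g at the corresponding
   convex combination of the arguments.  Since g is strictly convex on
   [0, oo), Jensen's inequality gives the claim, strictly when h12^2 <> h22^2. *)
From Stdlib Require Import Reals Lra Psatz.
From Coquelicot Require Import Coquelicot.
Open Scope R_scope.

Lemma strict_convex_of_increasing_derive (f f' : R -> R) (x y a : R) :
  (forall c, x <= c <= y -> derivable_pt_lim f c (f' c)) ->
  (forall s t, x <= s -> s < t -> t <= y -> f' s < f' t) ->
  x < y -> 0 < a < 1 ->
  f (a * x + (1 - a) * y) < a * f x + (1 - a) * f y.
Proof.
  intros Hder Hmono Hxy Ha.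
  set (z := a * x + (1 - a) * y).
  assert (Hxz : x < z) by (unfold z; nra).
  assert (Hzy : z < y) by (unfold z; nra).
  destruct (MVT_cor2 f f' x z) as [c1 [E1 Hc1]]; [lra| intros c Hc; apply Hder; lra |].
  destruct (MVT_cor2 f f' z y) as [c2 [E2 Hc2]]; [lra| intros c Hc; apply Hder; lra |].
  assert (Hc12 : f' c1 < f' c2) by (apply Hmono; lra).
  replace (z - x) with ((1 - a) * (y - x)) in E1 by (unfold z; ring).
  replace (y - z) with (a * (y - x)) in E2 by (unfold z; ring).
  assert (0 < a * (1 - a) * (y - x)) by (apply Rmult_lt_0_compat; nra).
  nra.
Qed.

(* Natural log of [1 + P / (1 + t)]: the rate of a link of power [P] facing
   interference power [t]. *)
Definition tin_gain (P t : R) : R := ln (1 + t + P) - ln (1 + t).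

Lemma tin_gain_derive (P t : R) : 0 < P -> 0 <= t ->
  derivable_pt_lim (tin_gain P) t (- (P / ((1 + t) * (1 + t + P)))).
Proof.
  intros HP Ht. apply is_derive_Reals. unfold tin_gain.
  auto_derive.
  - repeat split; lra.
  - field. lra.
Qed.

Lemma tin_gain_derive_increasing (P s t : R) : 0 < P -> 0 <= s -> s < t ->
  - (P / ((1 + s) * (1 + s + P))) < - (P / ((1 + t) * (1 + t + P))).
Proof.
  intros HP Hs Hst. apply Ropp_lt_contravar, Rmult_lt_compat_l; [lra |].
  apply Rinv_lt_contravar; [apply Rmult_lt_0_compat |]; nra.
Qed.

Lemma tin_gain_strict_convex (P x y a : R) :
  0 < P -> 0 <= x -> 0 <= y -> x <> y -> 0 < a < 1 ->
  tin_gain P (a * x + (1 - a) * y) < a * tin_gain P x + (1 - a) * tin_gain P y.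
Proof.
  intros HP Hx Hy Hxy Ha.
  assert (Hconv : forall u v b, 0 <= u -> u < v -> 0 < b < 1 ->
    tin_gain P (b * u + (1 - b) * v) < b * tin_gain P u + (1 - b) * tin_gain P v).
  { intros u v b Hu Huv Hb.
    apply (strict_convex_of_increasing_derive _
             (fun t => - (P / ((1 + t) * (1 + t + P))))); auto.
    - intros c Hc. apply tin_gain_derive; lra.
    - intros s t Hs Hst _. apply tin_gain_derive_increasing; lra. }
  destruct (Rtotal_order x y) as [Hlt | [Heq | Hgt]]; [auto | contradiction |].
  replace (a * x + (1 - a) * y) with ((1 - a) * y + (1 - (1 - a)) * x) by ring.
  replace (a * tin_gain P x + (1 - a) * tin_gain P y)
    with ((1 - a) * tin_gain P y + (1 - (1 - a)) * tin_gain P x) by ring.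
  apply Hconv; lra.
Qed.

Lemma tin_gain_convex (P x y a : R) :
  0 < P -> 0 <= x -> 0 <= y -> 0 < a < 1 ->
  tin_gain P (a * x + (1 - a) * y) <= a * tin_gain P x + (1 - a) * tin_gain P y.
Proof.
  intros HP Hx Hy Ha. destruct (Req_dec x y) as [-> | Hxy].
  - replace (a * y + (1 - a) * y) with y by ring. lra.
  - left. apply tin_gain_strict_convex; assumption.
Qed.

Lemma log2_tin_gain (P t : R) : 0 < P -> 0 <= t ->
  log2 (1 + P / (1 + t)) = tin_gain P t / ln 2.
Proof.
  intros HP Ht. unfold log2, tin_gain.
  replace (1 + P / (1 + t)) with ((1 + t + P) / (1 + t)) by (field; lra).
  rewrite ln_div; lra.
Qed.

Lemma ln_2_pos : 0 < ln 2.
Proof. rewrite <- ln_1. apply ln_increasing; lra. Qed.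

Lemma tdma_proportional_share_minus_SD_TIN (h12 h22 h31 P1 P2 P3 : R) :
  0 < P1 -> 0 < P2 -> 0 < P3 ->
  let a := P1 / (P1 + P2) in
  let x := h12 ^ 2 * (P1 + P2) in
  let y := h22 ^ 2 * (P1 + P2) in
  tdmaA h12 h22 h31 P1 P2 P3 a + tdmaB h12 h22 h31 P1 P2 P3 a
    - R_SD_TIN h12 h22 h31 P1 P2 P3
  = (a * tin_gain P3 x + (1 - a) * tin_gain P3 y
     - tin_gain P3 (a * x + (1 - a) * y)) / (2 * ln 2).
Proof.
  intros HP1 HP2 HP3 a x y.
  assert (Ha : 1 - a = P2 / (P1 + P2)) by (unfold a; field; lra).
  assert (Ha0 : 0 < a) by (unfold a; apply Rdiv_lt_0_compat; lra).
  assert (Ha1 : 0 < 1 - a) by (rewrite Ha; apply Rdiv_lt_0_compat; lra).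
  assert (Hx : 0 <= x) by (unfold x; nra).
  assert (Hy : 0 <= y) by (unfold y; nra).
  assert (0 <= a * x + (1 - a) * y) by nra.
  unfold tdmaA, tdmaB, R_SD_TIN.
  destruct (Req_EM_T a 0); [lra |].
  destruct (Req_EM_T (1 - a) 0); [lra |].
  replace (P1 / a) with (P1 + P2) by (unfold a; field; lra).
  replace (P2 / (1 - a)) with (P1 + P2) by (rewrite Ha; field; lra).
  replace (h12 ^ 2 * P1 / a) with x by (unfold x, a; field; lra).
  replace (h22 ^ 2 * P2 / (1 - a)) with y by (rewrite Ha; unfold y; field; lra).
  replace (1 + h12 ^ 2 * P1 + h22 ^ 2 * P2) with (1 + (a * x + (1 - a) * y))
    by (rewrite Ha; unfold a, x, y; field; lra).
  rewrite !log2_tin_gain by (assumption || nra).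
  pose proof ln_2_pos. field. lra.
Qed.

Lemma tdma_le_R_TDMA_TIN (h12 h22 h31 P1 P2 P3 a : R) : 0 <= a <= 1 ->
  Rbar_le (tdmaA h12 h22 h31 P1 P2 P3 a + tdmaB h12 h22 h31 P1 P2 P3 a)
          (R_TDMA_TIN h12 h22 h31 P1 P2 P3).
Proof.
  intros Ha. unfold R_TDMA_TIN.
  apply (proj1 (Lub_Rbar_correct _)). exists a. split; [exact Ha | reflexivity].
Qed.

Lemma proportional_share_bounds (P1 P2 : R) : 0 < P1 -> 0 < P2 ->
  0 < P1 / (P1 + P2) < 1.
Proof.
  intros HP1 HP2. split; [apply Rdiv_lt_0_compat; lra |].
  apply Rmult_lt_reg_r with (P1 + P2); [lra |]. field_simplify; lra.
Qed.

Lemma tdma_proportional_share_ge_SD_TIN (h12 h22 h31 P1 P2 P3 : R) :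
  0 < P1 -> 0 < P2 -> 0 < P3 ->
  let a := P1 / (P1 + P2) in
  R_SD_TIN h12 h22 h31 P1 P2 P3
    <= tdmaA h12 h22 h31 P1 P2 P3 a + tdmaB h12 h22 h31 P1 P2 P3 a.
Proof.
  intros HP1 HP2 HP3 a.
  pose proof (tdma_proportional_share_minus_SD_TIN h12 h22 h31 P1 P2 P3 HP1 HP2 HP3)
    as Hgap; cbv zeta in Hgap; fold a in Hgap.
  pose proof (tin_gain_convex P3 (h12 ^ 2 * (P1 + P2)) (h22 ^ 2 * (P1 + P2)) a
                HP3 ltac:(nra) ltac:(nra) (proportional_share_bounds P1 P2 HP1 HP2)).
  pose proof ln_2_pos.
  apply Rminus_le_0. rewrite Hgap. apply Rdiv_le_0_compat; lra.
Qed.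

Lemma tdma_proportional_share_gt_SD_TIN (h12 h22 h31 P1 P2 P3 : R) :
  0 < P1 -> 0 < P2 -> 0 < P3 -> h12 ^ 2 <> h22 ^ 2 ->
  let a := P1 / (P1 + P2) in
  R_SD_TIN h12 h22 h31 P1 P2 P3
    < tdmaA h12 h22 h31 P1 P2 P3 a + tdmaB h12 h22 h31 P1 P2 P3 a.
Proof.
  intros HP1 HP2 HP3 Hh a.
  pose proof (tdma_proportional_share_minus_SD_TIN h12 h22 h31 P1 P2 P3 HP1 HP2 HP3)
    as Hgap; cbv zeta in Hgap; fold a in Hgap.
  assert (Hxy : h12 ^ 2 * (P1 + P2) <> h22 ^ 2 * (P1 + P2))
    by (intro E; apply Hh, Rmult_eq_reg_r with (P1 + P2); lra).
  pose proof (tin_gain_strict_convex P3 (h12 ^ 2 * (P1 + P2)) (h22 ^ 2 * (P1 + P2)) a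
                HP3 ltac:(nra) ltac:(nra) Hxy
                (proportional_share_bounds P1 P2 HP1 HP2)).
  pose proof ln_2_pos.
  apply Rlt_0_minus. rewrite Hgap. apply Rdiv_lt_0_compat; lra.
Qed.

Theorem mainTheorem1 (h12 h22 h31 P1 P2 P3 : R)
  (hP1 : 0 < P1) (hP2 : 0 < P2) (hP3 : 0 < P3) :
  let astar := P1 / (P1 + P2) in
  Rbar_le (Finite (R_SD_TIN h12 h22 h31 P1 P2 P3)) (R_TDMA_TIN h12 h22 h31 P1 P2 P3)
  /\ tdmaA h12 h22 h31 P1 P2 P3 astar + tdmaB h12 h22 h31 P1 P2 P3 astar
       >= R_SD_TIN h12 h22 h31 P1 P2 P3
  /\ (h12 ^ 2 <> h22 ^ 2 ->
       tdmaA h12 h22 h31 P1 P2 P3 astar + tdmaB h12 h22 h31 P1 P2 P3 astar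
         > R_SD_TIN h12 h22 h31 P1 P2 P3
       /\ Rbar_lt (Finite (R_SD_TIN h12 h22 h31 P1 P2 P3))
                  (R_TDMA_TIN h12 h22 h31 P1 P2 P3)).
Proof.
  intros astar.
  pose proof (proportional_share_bounds P1 P2 hP1 hP2) as Hastar; fold astar in Hastar.
  pose proof (tdma_le_R_TDMA_TIN h12 h22 h31 P1 P2 P3 astar ltac:(lra)) as Hub.
  pose proof (tdma_proportional_share_ge_SD_TIN h12 h22 h31 P1 P2 P3 hP1 hP2 hP3) as Hge.
  split; [| split].
  - eapply Rbar_le_trans; [| exact Hub]. exact Hge.
  - apply Rle_ge, Hge.
  - intros Hh.
    pose proof (tdma_proportional_share_gt_SD_TIN h12 h22 h31 P1 P2 P3
                  hP1 hP2 hP3 Hh) as Hgt.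
    split; [exact Hgt |].
    eapply Rbar_lt_le_trans; [| exact Hub]. exact Hgt.
Qed.
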